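(* Let $\alpha>0$, $0\le m<s<M$, $f\in\mathcal{F}(m,M,s)$, and $x_0\in[0,\pi]$. Put $l=\pi(s-m)/(M-m)$ and $l^-=\pi-l$. Then $$\eta_\alpha(x_0)M-(M-m)\nu_\alpha(x_0,l^-)\le u_f(x_0)\le \eta_\alpha(x_0)m+(M-m)\nu_\alpha(x_0,l).$$ Equality holds in the right inequality if and only if $f=m+(M-m)\chi_{I(a_m,l)}$ a.e. on $[-\pi,\pi]$, where $a_m=x_0(1-lc_\alpha)$ if $x_0(1-lc_\alpha)<\pi-l$ and $a_m=\pi-l$ otherwise. Equality holds in the left inequality if and only if $f=M-(M-m)\chi_{I(a_m^-,l^-)}$ a.e. on $[-\pi,\pi]$, where $a_m^-=x_0(1-l^-c_\alpha)$ if $x_0(1-l^-c_\alpha)<\pi-l^-$ and $a_m^-=\pi-l^-$ otherwise.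
   Context: Robin problem: for $\alpha>0$ and $f\in L^1[-\pi,\pi]$, find $u\in C^1[-\pi,\pi]$ with $u'$ absolutely continuous on $[-\pi,\pi]$, $-u''=f$ a.e. on $(-\pi,\pi)$, and $-u'(-\pi)+\alpha u(-\pi)=u'(\pi)+\alpha u(\pi)=0$. It has a unique solution $u_f(x)=\int_{-\pi}^{\pi}G(x,y)f(y)\,dy$, where $G(x,y)=-\tfrac12 c_\alpha xy-\tfrac12|x-y|+\tfrac{1}{2c_\alpha}$ and $c_\alpha=\alpha/(1+\alpha\pi)$. For $0\le m<s<M$, $\mathcal{F}(m,M,s)$ is the set of $f\in L^1[-\pi,\pi]$ with $m\le f\le M$ and $\|f\|_{L^1}=2\pi s$. $I(a,l)=[a-l,a+l]$, $\chi_E$ is the characteristic function of $E$. $\eta_\alpha(x)=-\tfrac12x^2+\tfrac{\pi}{\alpha}+\tfrac{\pi^2}{2}$. For $x_0\in[0,\pi]$ and $l\in(0,\pi)$: $\nu_\alpha(x_0,l)=\dfrac{l}{c_\alpha}\Big(1-\dfrac{lc_\alpha}{2}\Big)\big(1-x_0^2c_\alpha^2\big)$ if $x_0<\dfrac{\pi-l}{1-lc_\alpha}$, and $\nu_\alpha(x_0,l)=-\tfrac12(\pi-x_0)^2+l(1-c_\alpha x_0)\big(2\pi-l+\tfrac1\alpha\big)$ otherwise. *)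

From HB Require Import structures.
From mathcomp Require Import all_boot all_order all_algebra.
From mathcomp Require Import all_classical all_reals all_analysis.
Set Implicit Arguments. Unset Strict Implicit. Unset Printing Implicit Defensive.
Import Order.TTheory GRing.Theory Num.Theory.
Import numFieldNormedType.Exports.
Local Open Scope classical_set_scope.
Local Open Scope ring_scope.

Section RobinDefs.
Variable R : realType.

Definition Ipi : set R := `[- pi, pi]%classic.

Definition c_alpha (alpha : R) : R := alpha / (1 + alpha * pi).

Definition Green (alpha x y : R) : R :=
  - (1/2) * c_alpha alpha * x * y - (1/2) * `|x - y| + 1 / (2 * c_alpha alpha).

Definition u_sol (alpha : R) (f : R -> R) (x : R) : R :=
  Rintegral lebesgue_measure Ipi (fun y => Green alpha x y * f y).

Definition Fclass (m M s : R) (f : R -> R) : Prop :=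
  [/\ measurable_fun Ipi f,
      lebesgue_measure.-integrable Ipi (fun x => (f x)%:E),
      {ae lebesgue_measure, forall x, Ipi x -> m <= f x <= M}
    & Rintegral lebesgue_measure Ipi (fun x => `|f x|) = 2 * pi * s].

Definition eta_alpha (alpha x : R) : R :=
  - (1/2) * x ^+ 2 + pi / alpha + pi ^+ 2 / 2.

Definition nu_alpha (alpha x0 l : R) : R :=
  let c := c_alpha alpha in
  if x0 < (pi - l) / (1 - l * c) then
    l / c * (1 - l * c / 2) * (1 - x0 ^+ 2 * c ^+ 2)
  else
    - (1/2) * (pi - x0) ^+ 2 + l * (1 - c * x0) * (2 * pi - l + 1 / alpha).

Definition chiI (a l x : R) : R := \1_(`[a - l, a + l]%classic) x.

Definition a_opt (alpha x0 l : R) : R :=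
  if x0 * (1 - l * c_alpha alpha) < pi - l then x0 * (1 - l * c_alpha alpha)
  else pi - l.

End RobinDefs.

From HB Require Import structures.
From mathcomp Require Import all_boot all_order all_algebra.
From mathcomp Require Import all_classical all_reals all_analysis.
From mathcomp Require Import ring lra measurable_realfun.
Import Order.TTheory GRing.Theory Num.Theory.
Import numFieldNormedType.Exports.
Local Open Scope classical_set_scope.
Local Open Scope ring_scope.

(* Bathtub principle.  The Green function G = G(x0, .) is a tent: affine with
   slope (1 - c x0)/2 left of x0 and -(1 + c x0)/2 right of x0, so its
   superlevel sets are intervals around x0.  The interval I(a_m, l) is the
   superlevel set {G >= t}, t = G(a_m - l), and phi = m + (M - m) chi_I has the
   same mass as f.  Since m <= f <= M, the product (G - t)(phi - f) is
   nonnegative, and as the masses agree its integral is u_phi - u_f; it vanishes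
   iff f = phi a.e., because G <> t off the two endpoints.  For the lower bound
   the same argument compares f with M - (M - m) chi, which puts the small value
   on the superlevel interval of half-length pi - l. *)

Section Rintegral_ae.
Context {d : measure_display} {T : measurableType d} {R : realType}.
Context {mu : {measure set T -> \bar R}} {D : set T}.
Hypothesis mD : measurable D.
Implicit Types (f g : T -> R).

Lemma integrableB_EFin {f g} : mu.-integrable D (EFin \o f) ->
  mu.-integrable D (EFin \o g) -> mu.-integrable D (EFin \o (f \- g)).
Proof. by move=> iif ig; have := integrableB mD iif ig; apply: eq_integrable. Qed.

Lemma integrableZl_EFin (k : R) {f} : mu.-integrable D (EFin \o f) ->
  mu.-integrable D (EFin \o (fun x => k * f x)).
Proof. by move=> iif; have := integrableZl mD k iif; apply: eq_integrable. Qed.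

Lemma ae_eq_Rintegral f g :
  measurable_fun D f -> measurable_fun D g -> f = g %[ae mu in D] ->
  \int[mu]_(x in D) f x = \int[mu]_(x in D) g x.
Proof.
move=> mf mg fg; congr fine; apply: ae_eq_integral => //.
- exact/measurable_EFinP.
- exact/measurable_EFinP.
- by apply: filterS fg => x + Dx => /= ->.
Qed.

Section ae_nonneg.
Variable k : T -> R.
Hypotheses (ik : mu.-integrable D (EFin \o k))
  (k_ge0 : {ae mu, forall x, D x -> 0 <= k x}).

Let Rintegral_abs : \int[mu]_(x in D) k x = \int[mu]_(x in D) `|k x|.
Proof.
have mk : measurable_fun D k by exact/measurable_EFinP/(measurable_int mu).
apply: ae_eq_Rintegral => //; first exact: measurableT_comp.
by apply: filterS k_ge0 => x + Dx => /(_ Dx) /ger0_norm.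
Qed.

Lemma ae_ge0_Rintegral_ge0 : 0 <= \int[mu]_(x in D) k x.
Proof. by rewrite Rintegral_abs; apply: Rintegral_ge0. Qed.

Lemma ae_ge0_Rintegral_eq0 :
  \int[mu]_(x in D) k x = 0 <-> {ae mu, forall x, D x -> k x = 0}.
Proof.
have /integrableP[_ absk_fin] := ik.
have absE : (\int[mu]_(x in D) `|(EFin \o k) x|)%E =
    (\int[mu]_(x in D) `|k x|)%:E.
  by rewrite fineK // ge0_fin_numE //; exact: integral_ge0.
have := ae_eq_integral_abs mu mD (measurable_int mu ik).
rewrite absE Rintegral_abs => -[abs0 ae0]; split.
- move=> e; apply: filterS (abs0 (congr1 EFin e)) => x + Dx.
  by move=> /(_ Dx) [].
- move=> k0; apply: EFin_inj; apply: ae0; apply: filterS k0 => x + Dx.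
  by move=> /(_ Dx) /= ->.
Qed.

End ae_nonneg.

Section bathtub.
Variables (K g h : T -> R) (t : R).
Hypotheses (ig : mu.-integrable D (EFin \o g)) (ih : mu.-integrable D (EFin \o h))
  (iKg : mu.-integrable D (EFin \o (K \* g)))
  (iKh : mu.-integrable D (EFin \o (K \* h))).
Hypothesis g_h_mass : \int[mu]_(x in D) g x = \int[mu]_(x in D) h x.
Hypothesis level_sign : {ae mu, forall x, D x -> 0 <= (K x - t) * (h x - g x)}.

Let excess : mu.-integrable D (EFin \o (fun x => (K x - t) * (h x - g x))).
Proof.
have := integrableB_EFin (integrableB_EFin iKh iKg)
  (integrableZl_EFin t (integrableB_EFin ih ig)).
by apply: eq_integrable => // x _ /=; congr EFin; ring.
Qed.

Let excessE : \int[mu]_(x in D) (K x * h x) - \int[mu]_(x in D) (K x * g x) =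
  \int[mu]_(x in D) ((K x - t) * (h x - g x)).
Proof.
have -> : \int[mu]_(x in D) ((K x - t) * (h x - g x)) =
    \int[mu]_(x in D) ((K x * h x - K x * g x) - t * (h x - g x)).
  by apply: eq_Rintegral => x _; ring.
rewrite RintegralB //; last first.
- exact: integrableZl_EFin (integrableB_EFin ih ig).
- exact: integrableB_EFin.
rewrite RintegralZl ?RintegralB ?g_h_mass ?subrr ?mulr0 ?subr0 //.
exact: integrableB_EFin.
Qed.

Lemma bathtub_le : \int[mu]_(x in D) (K x * g x) <= \int[mu]_(x in D) (K x * h x).
Proof. by rewrite -subr_ge0 excessE; exact: ae_ge0_Rintegral_ge0. Qed.

Lemma bathtub_eq : {ae mu, forall x, D x -> K x != t} ->
  \int[mu]_(x in D) (K x * g x) = \int[mu]_(x in D) (K x * h x) <->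
  {ae mu, forall x, D x -> g x = h x}.
Proof.
move=> K_neq_t; have eq0 := ae_ge0_Rintegral_eq0 _ excess level_sign.
rewrite -excessE in eq0; apply: (iff_trans _ (iff_trans eq0 _)).
  by split => [->|/subr0_eq ->]; rewrite ?subrr.
split.
- move=> excess0; apply: filterS2 K_neq_t excess0 => x Kx + Dx => /(_ Dx) /eqP.
  by rewrite mulf_eq0 !subr_eq0 (negbTE (Kx Dx)) => /eqP ->.
- move=> gh; apply: filterS gh => x + Dx => /(_ Dx) ->.
  by rewrite subrr mulr0.
Qed.

End bathtub.
End Rintegral_ae.

(* The generic [Filter (almost_everywhere _)] hint does not fire for the
   carrier of the Lebesgue measure. *)
#[local] Instance lebesgue_ae_filter (R : realType) :
  Filter (almost_everywhere (@lebesgue_measure R)) := ae_filter_ringOfSetsType _.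

Section lebesgue_itv.
Context {R : realType}.
Notation mu := (@lebesgue_measure R).

Lemma lebesgue_ae_neq (p : R) : {ae mu, forall x, x != p}.
Proof.
exists [set p]; split => //; first exact: lebesgue_measure_set1.
by move=> x /= /negP; rewrite negbK => /eqP.
Qed.

Lemma continuous_dist (x0 : R) : continuous (fun y : R => `|x0 - y|).
Proof. by move=> y; apply: cvg_norm; apply: cvgB; [exact: cvg_cst | exact: cvg_id]. Qed.

Lemma continuous_itv_integrable (a b : R) {g : R -> R} : continuous g ->
  mu.-integrable `[a, b] (EFin \o g).
Proof.
move=> cg; apply: continuous_compact_integrable; first exact: segment_compact.
exact: continuous_subspaceT.
Qed.

Lemma Rintegral_itv_affine (a b p q : R) : a <= b ->
  \int[mu]_(x in `[a, b]) (p + q * x) = p * (b - a) + q * (b ^+ 2 - a ^+ 2) / 2.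
Proof.
rewrite le_eqVlt => /predU1P[<-|ab].
  by rewrite set_itv1 Rintegral_set1 !subrr !mulr0 mul0r addr0.
pose P : {poly R} := p%:P * 'X + (q / 2)%:P * 'X ^+ 2.
have PE y : P.[y] = p * y + q / 2 * y ^+ 2 by rewrite /P !hornerE.
have P'E y : (deriv P).[y] = p + q * y.
  by rewrite /P !poly.derivE !hornerE /=; field.
rewrite /Rintegral (@continuous_FTC2 _ _ (horner P)) //.
- by rewrite -EFinB /= !PE; field.
- apply: continuous_subspaceT => y.
  by apply: cvgD; [exact: cvg_cst | apply: cvgM; [exact: cvg_cst | exact: cvg_id]].
- split.
  + by move=> y _; exact: ex_derive.
  + exact/cvg_at_right_filter/continuous_horner.
  + exact/cvg_at_left_filter/continuous_horner.
- by move=> y _; rewrite derive1E derive_val P'E.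
Qed.

Lemma Rintegral_itv_dist (a b x0 : R) : a <= x0 -> x0 <= b ->
  \int[mu]_(y in `[a, b]) `|x0 - y| = ((x0 - a) ^+ 2 + (b - x0) ^+ 2) / 2.
Proof.
move=> ax xb.
have := @Rintegral_itvB R _ (BLeft a) (BRight b) x0
  (continuous_itv_integrable a b (continuous_dist x0)).
rewrite !bnd_simp => /(_ ax xb) split_x0.
rewrite -(subrK (\int[mu]_(y in `[a, x0]) `|x0 - y|) (\int[mu]_(y in `[a, b]) _)).
rewrite split_x0 Rintegral_itv_obnd_cbnd; last first.
  apply: integrableS (continuous_itv_integrable x0 b (continuous_dist x0)) => //.
  exact: subset_itv_oc_cc.
have -> : \int[mu]_(y in `[a, x0]) `|x0 - y| = \int[mu]_(y in `[a, x0]) (x0 + -1 * y).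
  apply: eq_Rintegral => y; rewrite inE /= in_itv /= => /andP[_ yx].
  by rewrite ger0_norm ?subr_ge0 // mulN1r.
have -> : \int[mu]_(y in `[x0, b]) `|x0 - y| = \int[mu]_(y in `[x0, b]) (- x0 + 1 * y).
  apply: eq_Rintegral => y; rewrite inE /= in_itv /= => /andP[xy _].
  by rewrite ler0_norm ?subr_le0 // mul1r opprB addrC.
by rewrite !Rintegral_itv_affine //; field.
Qed.

End lebesgue_itv.

Lemma continuous_Green {R : realType} (alpha x0 : R) : continuous (Green alpha x0).
Proof.
move=> y; apply: cvgD; last exact: cvg_cst.
apply: cvgB; last by apply: cvgM; [exact: cvg_cst | exact: continuous_dist].
by apply: cvgM; [exact: cvg_cst | exact: cvg_id].
Qed.

Section Green.
Context {R : realType}.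
Notation mu := (@lebesgue_measure R).
Context {alpha x0 : R}.
Hypotheses (alpha_gt0 : 0 < alpha) (x0_itv : 0 <= x0 <= pi).

Let c := c_alpha alpha.
Let G := Green alpha x0.

Lemma c_alpha_gt0 : 0 < c.
Proof. by rewrite divr_gt0 // addr_gt0 // mulr_gt0 // pi_gt0. Qed.

Lemma c_alpha_pi_lt1 : c * pi < 1.
Proof.
by rewrite /c /c_alpha mulrAC ltr_pdivrMr ?mul1r ?ltrDr // addr_gt0 // mulr_gt0 // pi_gt0.
Qed.

Let c_x0_itv : 0 <= c * x0 < 1.
Proof.
have [x0_ge0 x0_le_pi] := andP x0_itv.
rewrite mulr_ge0 ?(ltW c_alpha_gt0) //=.
by apply: le_lt_trans c_alpha_pi_lt1; rewrite ler_pM2l // c_alpha_gt0.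
Qed.

Lemma Green_leftE y : y <= x0 -> G y = G x0 - (1 - c * x0) / 2 * (x0 - y).
Proof. by move=> yx; rewrite /G /Green subrr normr0 ger0_norm ?subr_ge0 // -/c; ring. Qed.

Lemma Green_rightE y : x0 <= y -> G y = G x0 - (1 + c * x0) / 2 * (y - x0).
Proof. by move=> xy; rewrite /G /Green subrr normr0 ler0_norm ?subr_le0 // -/c; ring. Qed.

Lemma Rintegral_Green_itv a b : a <= x0 -> x0 <= b ->
  \int[mu]_(y in `[a, b]) G y = 1 / (2 * c) * (b - a)
    - c * x0 * (b ^+ 2 - a ^+ 2) / 4 - ((x0 - a) ^+ 2 + (b - x0) ^+ 2) / 4.
Proof.
move=> ax xb.
have -> : \int[mu]_(y in `[a, b]) G y =
    \int[mu]_(y in `[a, b]) ((1 / (2 * c) + - (c * x0 / 2) * y) - 1 / 2 * `|x0 - y|).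
  by apply: eq_Rintegral => y _; rewrite /G /Green -/c; ring.
rewrite RintegralB //; last first.
- apply: integrableZl_EFin => //; exact: continuous_itv_integrable (continuous_dist x0).
- apply: continuous_itv_integrable => y.
  by apply: cvgD; [exact: cvg_cst | apply: cvgM; [exact: cvg_cst | exact: cvg_id]].
rewrite RintegralZl //; last exact: continuous_itv_integrable (continuous_dist x0).
rewrite Rintegral_itv_affine ?Rintegral_itv_dist ?(le_trans ax xb) //.
by field; rewrite gt_eqF // c_alpha_gt0.
Qed.

Let alpha_neq0 : alpha != 0. Proof. by rewrite gt_eqF. Qed.

Let alpha_pi_neq0 : 1 + alpha * pi != 0.
Proof. by rewrite gt_eqF // addr_gt0 // mulr_gt0 // pi_gt0. Qed.

Lemma Rintegral_Green_Ipi : \int[mu]_(y in @Ipi R) G y = eta_alpha alpha x0.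
Proof.
have [x0_ge0 x0_le_pi] := andP x0_itv; have pi_gt0 := @pi_gt0 R.
rewrite /Ipi Rintegral_Green_itv; [|lra|lra].
(* [pi] is generalized because [field] would unfold it. *)
rewrite /eta_alpha /c /c_alpha; move: alpha_pi_neq0; move: (pi : R) => P P_neq0.
by field; rewrite alpha_neq0 P_neq0.
Qed.

Section optimal_interval.
Context {L : R}.
Hypothesis L_itv : 0 < L < pi.

Let a := a_opt alpha x0 L.
Let t := G (a - L).

Let Lc_lt1 : L * c < 1.
Proof.
have := c_alpha_gt0; have := c_alpha_pi_lt1; have [? ?] := andP L_itv; nra.
Qed.

Lemma a_opt_itv : [/\ - pi <= a - L, a + L <= pi, a - L <= x0 & x0 <= a + L].
Proof.
have [L_gt0 L_lt_pi] := andP L_itv; have [x0_ge0 x0_le_pi] := andP x0_itv.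
have shrink : 0 <= x0 * (1 - L * c) /\ x0 - L <= x0 * (1 - L * c) <= x0.
  have -> : x0 * (1 - L * c) = x0 - L * (c * x0) by ring.
  split; first by rewrite subr_ge0 mulrA ler_piMl // ltW // Lc_lt1.
  by have [? ?] := andP c_x0_itv; apply/andP; split; nra.
rewrite /a /a_opt -/c; move: shrink; set b := x0 * (1 - L * c).
by case: ltP => hb [? /andP[? ?]]; split; lra.
Qed.

Lemma subset_opt_Ipi : `[a - L, a + L] `<=` @Ipi R.
Proof.
have [? ? _ _] := a_opt_itv.
by move=> y; rewrite /Ipi /= !in_itv /= => /andP[? ?]; apply/andP; split; lra.
Qed.

Lemma Rintegral_Green_opt : \int[mu]_(y in `[a - L, a + L]) G y = nu_alpha alpha x0 L.
Proof.
have [_ _ ? ?] := a_opt_itv.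
rewrite Rintegral_Green_itv // /nu_alpha /a /a_opt -/c ltr_pdivlMr ?subr_gt0 ?Lc_lt1 //.
case: ifP => _; rewrite /c /c_alpha; move: alpha_pi_neq0; move: (pi : R) => P P_neq0;
  by field; rewrite alpha_neq0 P_neq0.
Qed.

(* Unless the interval is pushed against pi, a_opt = x0 - L c x0 is the centre
   for which the tent G takes the same value at both endpoints a -+ L. *)
Lemma Green_opt_level y : - pi <= y <= pi ->
  [/\ a - L <= y <= a + L -> t <= G y,
      ~~ (a - L <= y <= a + L) -> G y < t
    & a - L < y < a + L -> t < G y].
Proof.
move=> /andP[y_ge y_le].
have [aL_ge aL_le aL_x0 x0_aL] := a_opt_itv.
have [x0_ge0 x0_le_pi] := andP x0_itv; have [L_gt0 L_lt_pi] := andP L_itv.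
have tE : t = G x0 - (1 - c * x0) / 2 * (x0 - (a - L)) by rewrite /t Green_leftE.
have aE : a = x0 - L * (c * x0) /\ x0 - L * (c * x0) < pi - L \/
          a = pi - L /\ pi - L <= x0 - L * (c * x0).
  rewrite /a /a_opt -/c (_ : x0 * (1 - L * c) = x0 - L * (c * x0)); last by ring.
  by case: ltP; [left|right].
rewrite negb_and -!ltNge tE; have [cx0_ge0 cx0_lt1] := andP c_x0_itv.
have [yx|xy] := lerP y x0.
  rewrite (Green_leftE _ yx); move: (G x0) (c * x0) cx0_ge0 cx0_lt1 => G0 u ? ?.
  by split => [/andP[? ?]|/orP[?|?]|/andP[? ?]]; nra.
rewrite (Green_rightE _ (ltW xy)); move: (G x0) (c * x0) cx0_ge0 cx0_lt1 aE => G0 u ? ?.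
by case=> -[aE ?]; rewrite aE in aL_ge aL_le aL_x0 x0_aL *;
  split => [/andP[? ?]|/orP[?|?]|/andP[? ?]]; nra.
Qed.

Lemma Green_opt_sign y v w : Ipi y ->
  (a - L <= y <= a + L -> v <= w) -> (~~ (a - L <= y <= a + L) -> w <= v) ->
  0 <= (G y - t) * (w - v).
Proof.
rewrite /Ipi /= in_itv /= => y_itv vw wv.
have [le_t lt_t _] := Green_opt_level _ y_itv.
have [yJ|yJ] := boolP (a - L <= y <= a + L).
- by rewrite mulr_ge0 // subr_ge0; [exact: le_t | exact: vw].
- by rewrite mulr_le0 // subr_le0; [exact/ltW/lt_t | exact: wv].
Qed.

Lemma Green_opt_ae_neq : {ae mu, forall y, Ipi y -> G y != t}.
Proof.
apply: filterS2 (lebesgue_ae_neq (a - L)) (lebesgue_ae_neq (a + L)) => y yl yr.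
rewrite /Ipi /= in_itv /= => y_itv.
have [_ lt_t gt_t] := Green_opt_level _ y_itv.
have [/andP[yl' yr']|yJ] := boolP (a - L <= y <= a + L); last by rewrite lt_eqF // lt_t.
by rewrite gt_eqF // gt_t // !lt_neqAle yl' yr' [a - L == _]eq_sym yl yr.
Qed.

End optimal_interval.
End Green.

Section profile.
Context {R : realType}.
Notation mu := (@lebesgue_measure R).
Local Notation D := (@Ipi R).

Let mD : measurable (D : set (measurableTypeR R)). Proof. exact: measurable_itv. Qed.

Lemma integrable_Ipi_bounded (g : R -> R) (B : R) : measurable_fun D g ->
  (forall y, D y -> `|g y| <= B) -> mu.-integrable D (EFin \o g).
Proof.
move=> mg gB; apply: measurable_bounded_integrable => //.
  by apply: compact_finite_measure; exact: segment_compact.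
exists B; split; first exact: num_real.
by move=> M BM y /gB gyB; exact: le_trans gyB (ltW BM).
Qed.

Lemma integrable_Ipi_cst (p : R) : mu.-integrable D (EFin \o cst p).
Proof. exact: (@integrable_Ipi_bounded _ `|p|). Qed.

Lemma integrable_chiI (a L : R) : mu.-integrable D (EFin \o chiI a L).
Proof.
apply: (@integrable_Ipi_bounded _ 1) => [|y _].
  by apply: measurable_indic; exact: measurable_itv.
by rewrite /chiI indicE; case: (_ \in _); rewrite ?normr1 ?normr0.
Qed.

Lemma integrable_profile {a L p q : R} {phi : R -> R} :
  phi =1 (fun y => p + q * chiI a L y) -> mu.-integrable D (EFin \o phi).
Proof.
move=> /funext ->; have mJ : measurable `[a - L, a + L] by exact: measurable_itv.
apply: (@integrable_Ipi_bounded _ (`|p| + `|q|)) => [|y _].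
  by apply: measurable_funD => //; apply: measurable_funM => //; exact: measurable_indic.
rewrite (le_trans (ler_normD _ _)) // lerD2l normrM /chiI indicE.
by case: (_ \in _); rewrite ?normr1 ?normr0 ?mulr1 ?mulr0.
Qed.

Lemma integrable_continuous_mul {k g : R -> R} : continuous k ->
  mu.-integrable D (EFin \o g) -> mu.-integrable D (EFin \o (k \* g)).
Proof.
move=> ck ig.
have /compact_bounded[B [_ kB]] := continuous_compact
  (continuous_subspaceT (A := D) ck) (@segment_compact _ (- pi) pi).
have mk : measurable_fun D k.
  by apply: measurable_funTS; exact: continuous_measurable_fun.
have bk : [bounded k y | y in D].
  by exists B; split; rewrite ?num_real // => ? ? ? ?; exact: kB.
have := integrableMr mD mk bk ig.
by apply: eq_integrable => [|y _ /=]; [exact: mD | rewrite EFinM].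
Qed.

Lemma chiIE (a L y : R) : chiI a L y = if a - L <= y <= a + L then 1 else 0.
Proof. by rewrite /chiI indicE mem_setE in_itv /=; case: ifP. Qed.

Lemma Rintegral_chiI_mul (k : R -> R) (a L : R) : `[a - L, a + L] `<=` D ->
  \int[mu]_(y in D) (k y * chiI a L y) = \int[mu]_(y in `[a - L, a + L]) k y.
Proof.
move=> JD; rewrite -(setIidr JD) Rintegral_mkcondr; apply: eq_Rintegral => y _.
by rewrite patchE /chiI indicE; case: (_ \in _); rewrite ?mulr1 ?mulr0.
Qed.

Lemma Rintegral_profile {a L p q : R} {phi : R -> R} : 0 < L ->
  `[a - L, a + L] `<=` D -> phi =1 (fun y => p + q * chiI a L y) ->
  \int[mu]_(y in D) phi y = 2 * pi * p + 2 * L * q.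
Proof.
move=> L_gt0 JD /funext ->.
have iq : mu.-integrable D (EFin \o (fun y => q * chiI a L y)).
  by apply: integrableZl_EFin => //; exact: integrable_chiI.
rewrite RintegralD //; last exact: integrable_Ipi_cst.
rewrite RintegralZl //; last exact: integrable_chiI.
have -> : \int[mu]_(y in D) chiI a L y = \int[mu]_(y in D) ((1 + 0 * y) * chiI a L y).
  by apply: eq_Rintegral => y _; rewrite mul0r addr0 mul1r.
have -> : \int[mu]_(y in D) p = \int[mu]_(y in `[- pi, pi]) (p + 0 * y).
  by apply: eq_Rintegral => y _; rewrite mul0r addr0.
have pi_gt0 := @pi_gt0 R.
rewrite Rintegral_chiI_mul // !Rintegral_itv_affine; [ring | lra | lra].
Qed.

Lemma Fclass_Rintegral {m M s : R} {f : R -> R} : 0 <= m -> Fclass m M s f ->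
  \int[mu]_(y in D) f y = 2 * pi * s.
Proof.
move=> m_ge0 [mf intf f_bnd <-]; apply: ae_eq_Rintegral => //.
  exact: measurableT_comp.
apply: filterS f_bnd => y + Dy => /(_ Dy) /andP[fm _].
by rewrite ger0_norm // (le_trans m_ge0).
Qed.

End profile.

Section Robin_bathtub.
Context {R : realType}.
Notation mu := (@lebesgue_measure R).
Local Notation D := (@Ipi R).
Context {alpha x0 : R}.
Hypotheses (alpha_gt0 : 0 < alpha) (x0_itv : 0 <= x0 <= pi).
Context {L : R}.
Hypothesis L_itv : 0 < L < pi.

Let G := Green alpha x0.
Let a := a_opt alpha x0 L.

Let mD : measurable (D : set (measurableTypeR R)). Proof. exact: measurable_itv. Qed.

Lemma u_sol_profile {p q : R} {phi : R -> R} :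
  phi =1 (fun y => p + q * chiI a L y) ->
  u_sol alpha phi x0 = p * eta_alpha alpha x0 + q * nu_alpha alpha x0 L.
Proof.
move=> /funext ->.
have iG : mu.-integrable D (EFin \o G).
  exact: continuous_itv_integrable (continuous_Green alpha x0).
have iGchi : mu.-integrable D (EFin \o (G \* chiI a L)).
  exact: integrable_continuous_mul (continuous_Green alpha x0) (integrable_chiI a L).
rewrite /u_sol -/G.
have -> : \int[mu]_(y in D) (G y * (p + q * chiI a L y)) =
    \int[mu]_(y in D) (p * G y + q * (G y * chiI a L y)).
  by apply: eq_Rintegral => y _; ring.
rewrite RintegralD //; last 2 first.
- exact: integrableZl_EFin.
- exact: integrableZl_EFin.
rewrite !RintegralZl // Rintegral_chiI_mul; last exact: subset_opt_Ipi.
by rewrite Rintegral_Green_Ipi // Rintegral_Green_opt.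
Qed.

Lemma u_sol_bathtub {g h : R -> R} :
  mu.-integrable D (EFin \o g) -> mu.-integrable D (EFin \o h) ->
  \int[mu]_(y in D) g y = \int[mu]_(y in D) h y ->
  {ae mu, forall y, D y -> (a - L <= y <= a + L -> g y <= h y) /\
                           (~~ (a - L <= y <= a + L) -> h y <= g y)} ->
  u_sol alpha g x0 <= u_sol alpha h x0 /\
  (u_sol alpha g x0 = u_sol alpha h x0 <-> {ae mu, forall y, D y -> g y = h y}).
Proof.
move=> ig ih gh_mass gh_order.
have iGg := integrable_continuous_mul (continuous_Green alpha x0) ig.
have iGh := integrable_continuous_mul (continuous_Green alpha x0) ih.
have sign : {ae mu, forall y, D y -> 0 <= (G y - G (a - L)) * (h y - g y)}.
  apply: filterS gh_order => y + Dy => /(_ Dy) [gh hg].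
  exact: Green_opt_sign.
split; first exact: bathtub_le sign.
apply: bathtub_eq sign _ => //.
exact: Green_opt_ae_neq.
Qed.

Section bounds.
Context {m M : R} {f : R -> R}.
Hypotheses (intf : mu.-integrable D (EFin \o f))
  (f_bnd : {ae mu, forall y, D y -> m <= f y <= M}).

Lemma u_sol_upper_bound : \int[mu]_(y in D) f y = 2 * pi * m + 2 * L * (M - m) ->
  u_sol alpha f x0 <= eta_alpha alpha x0 * m + (M - m) * nu_alpha alpha x0 L /\
  (u_sol alpha f x0 = eta_alpha alpha x0 * m + (M - m) * nu_alpha alpha x0 L <->
   {ae mu, forall y, D y -> f y = m + (M - m) * chiI a L y}).
Proof.
move=> f_mass; pose phi y := m + (M - m) * chiI a L y.
have phiE : phi =1 (fun y => m + (M - m) * chiI a L y) by [].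
have [L_gt0 _] := andP L_itv.
rewrite [_ * m]mulrC -(u_sol_profile phiE); apply: u_sol_bathtub => //.
- exact: integrable_profile phiE.
- by rewrite f_mass (Rintegral_profile L_gt0 (subset_opt_Ipi alpha_gt0 x0_itv L_itv) phiE).
- apply: filterS f_bnd => y + Dy => /(_ Dy) /andP[fm fM].
  by rewrite /phi chiIE; case: ifP => _; split => // _; lra.
Qed.

Lemma u_sol_lower_bound : \int[mu]_(y in D) f y = 2 * pi * M - 2 * L * (M - m) ->
  eta_alpha alpha x0 * M - (M - m) * nu_alpha alpha x0 L <= u_sol alpha f x0 /\
  (eta_alpha alpha x0 * M - (M - m) * nu_alpha alpha x0 L = u_sol alpha f x0 <->
   {ae mu, forall y, D y -> f y = M - (M - m) * chiI a L y}).
Proof.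
move=> f_mass; pose psi y := M - (M - m) * chiI a L y.
have psiE : psi =1 (fun y => M + (m - M) * chiI a L y) by move=> y; rewrite /psi; ring.
have [L_gt0 _] := andP L_itv.
have -> : eta_alpha alpha x0 * M - (M - m) * nu_alpha alpha x0 L = u_sol alpha psi x0.
  by rewrite (u_sol_profile psiE); ring.
have [] := @u_sol_bathtub psi f (integrable_profile psiE) intf.
- by rewrite f_mass (Rintegral_profile L_gt0 (subset_opt_Ipi alpha_gt0 x0_itv L_itv) psiE); ring.
- apply: filterS f_bnd => y + Dy => /(_ Dy) /andP[fm fM].
  by rewrite /psi chiIE; case: ifP => _; split => // _; lra.
- by move=> ? psi_f; split => //; apply: iff_trans psi_f _; split => /ae_eq_sym.
Qed.

End bounds.
End Robin_bathtub.

Theorem theorem2 (R : realType) (alpha m M s : R) (f : R -> R) (x0 : R) :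
  0 < alpha -> 0 <= m -> m < s -> s < M ->
  Fclass m M s f ->
  0 <= x0 <= pi ->
  let l := pi * (s - m) / (M - m) in
  let lm := pi - l in
  [/\ eta_alpha alpha x0 * M - (M - m) * nu_alpha alpha x0 lm <= u_sol alpha f x0,
      u_sol alpha f x0 <= eta_alpha alpha x0 * m + (M - m) * nu_alpha alpha x0 l,
      u_sol alpha f x0 = eta_alpha alpha x0 * m + (M - m) * nu_alpha alpha x0 l <->
        {ae lebesgue_measure, forall x, Ipi x ->
           f x = m + (M - m) * chiI (a_opt alpha x0 l) l x}
    & eta_alpha alpha x0 * M - (M - m) * nu_alpha alpha x0 lm = u_sol alpha f x0 <->
        {ae lebesgue_measure, forall x, Ipi x ->
           f x = M - (M - m) * chiI (a_opt alpha x0 lm) lm x}].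
Proof.
move=> alpha_gt0 m_ge0 m_lt_s s_lt_M Ff x0_itv l lm.
have f_mass := Fclass_Rintegral m_ge0 Ff.
case: Ff => _ intf f_bnd _.
have Mm_gt0 : 0 < M - m by rewrite subr_gt0 (lt_trans m_lt_s).
have l_mass : l * (M - m) = pi * (s - m) by rewrite /l divfK ?gt_eqF.
have pi_gt0 := @pi_gt0 R.
have l_itv : 0 < l < pi.
  apply/andP; split; first by rewrite /l divr_gt0 // mulr_gt0 // subr_gt0.
  by rewrite -(ltr_pM2r Mm_gt0) l_mass ltr_pM2l // ltrD2r.
have lm_itv : 0 < lm < pi by rewrite /lm; lra.
have s_mass : 2 * pi * s = 2 * pi * m + 2 * (l * (M - m)) by rewrite l_mass; ring.
have mass_l : \int[lebesgue_measure]_(y in @Ipi R) f y = 2 * pi * m + 2 * l * (M - m).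
  by rewrite f_mass s_mass; ring.
have mass_lm : \int[lebesgue_measure]_(y in @Ipi R) f y = 2 * pi * M - 2 * lm * (M - m).
  by rewrite f_mass s_mass /lm; ring.
have [ub ub_eq] := u_sol_upper_bound alpha_gt0 x0_itv l_itv intf f_bnd mass_l.
have [lb lb_eq] := u_sol_lower_bound alpha_gt0 x0_itv lm_itv intf f_bnd mass_lm.
by split.
Qed.
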